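(* Let $\mathcal V$ be a finite set of variables, $\mathcal P$ a finite set of labels, and $\mathcal C$ a finite set of nonempty subsets of $\mathcal V$. For each $C\in\mathcal C$ let $\mathcal D_C\subseteq\mathcal P^C$ and $\hat\theta_{C,\vec d}\le0$ for $\vec d\in\mathcal D_C$, and suppose every potential is permuted $\mathcal P^n$-Potts: for all $C\in\mathcal C$, all $\vec d',\vec d''\in\mathcal D_C$ with $\vec d'\ne\vec d''$, and all $i\in C$, we have $d'_i\ne d''_i$. Let $$E^*_I(\vec y,\vec z)=-\sum_{C\in\mathcal C}\sum_{\vec d\in\mathcal D_C}\hat\theta_{C,\vec d}\Big((|C|-1)z_{C,\vec d}-\sum_{\ell\in C}y_{\ell d_\ell}z_{C,\vec d}\Big)$$ for binary $y_{ip}$ ($i\in\mathcal V,p\in\mathcal P$) and $z_{C,\vec d}$, and $D(\vec\lambda)=\min_{\vec y,\vec z\text{ binary}}\big(E^*_I(\vec y,\vec z)+\sum_{i\in\mathcal V}\lambda_i(\sum_{p}y_{ip}-1)\big)$ for $\vec\lambda\in\mathbb R^{\mathcal V}$. Then $\max_{\vec\lambda}D(\vec\lambda)$ equals the optimal value of the linear program in variables $y_{ip}\in[0,1]$ ($i\in\mathcal V,p\in\mathcal P$) and $y_{C,\vec p}\in[0,1]$ ($C\in\mathcal C$, $\vec p\in\mathcal P^C$): $$\min\ \sum_{C\in\mathcal C}\sum_{\vec d\in\mathcal D_C}\hat\theta_{C,\vec d}\,y_{C,\vec d}$$ subject to $y_{C,\vec d}\le y_{\ell d_\ell}$ for all $C\in\mathcal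 C,\vec d\in\mathcal D_C,\ell\in C$; $\sum_{p\in\mathcal P}y_{ip}=1$ for all $i\in\mathcal V$; and $\sum_{\vec p\in\mathcal P^C:\,p_\ell=p_0}y_{C,\vec p}=y_{\ell p_0}$ for all $C\in\mathcal C$, $p_0\in\mathcal P$, $\ell\in C$.
   Context: The potentials are sparse pattern-based: $\theta_C(\vec x_C)=\hat\theta_{C,\vec d}$ if $\vec x_C=\vec d\in\mathcal D_C$ and $0$ otherwise, and the energy is $E(\vec x)=\sum_{C}\theta_C(\vec x_C)$. A labeling $\vec p\in\mathcal P^C$ is a map $C\to\mathcal P$ with value $p_\ell$ at $\ell\in C$. $D$ is the Lagrangian dual of the submodular relaxation obtained by relaxing the consistency constraints $\sum_p y_{ip}=1$. *)

From mathcomp Require Import all_boot all_order all_algebra.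
Set Implicit Arguments. Unset Strict Implicit. Unset Printing Implicit Defensive.
Import Order.TTheory GRing.Theory Num.Theory.
Local Open Scope ring_scope.

Section Defs.
Variables (R : realFieldType) (V P : finType).

Definition lab (C : {set V}) : finType := {ffun {x : V | x \in C} -> P}.

Definition ybin := {ffun V * P -> bool}.
(* binary variables z_{C,d} (indexed by all C; only C in Cs matter) *)
Definition zbin := {dffun forall C : {set V}, {ffun lab C -> bool}}.

Variables (Cs : {set {set V}}) (Dc : forall C : {set V}, {set lab C})
          (theta : forall C : {set V}, lab C -> R).

Definition EstarI (y : ybin) (z : zbin) : R :=
  - \sum_(C in Cs) \sum_(d in Dc C)
      theta d * ((#|C|%:R - 1) * (z C d)%:R
                 - \sum_(l : {x : V | x \in C}) (y (val l, d l))%:R * (z C d)%:R).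

Definition Lag (lam : V -> R) (y : ybin) (z : zbin) : R :=
  EstarI y z + \sum_(i : V) lam i * (\sum_(p : P) (y (i, p))%:R - 1).

Definition y0 : ybin := [ffun _ => false].
Definition z0 : zbin := [ffun C => [ffun _ => false]].

(* D(lambda) = min over binary y, z of the Lagrangian (finite minimum;
   the seed value is itself one of the minimized terms) *)
Definition Ddual (lam : V -> R) : R :=
  \big[Num.min/Lag lam y0 z0]_(y : ybin) \big[Num.min/Lag lam y0 z0]_(z : zbin)
     Lag lam y z.

Definition LP_feasible (yv : V -> P -> R) (yc : forall C : {set V}, lab C -> R) : Prop :=
  (forall i p, 0 <= yv i p <= 1) /\
  (forall C, C \in Cs -> forall p : lab C, 0 <= yc C p <= 1) /\
  (forall C, C \in Cs -> forall d, d \in Dc C ->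
     forall l : {x : V | x \in C}, yc C d <= yv (val l) (d l)) /\
  (forall i, \sum_(p : P) yv i p = 1) /\
  (forall C, C \in Cs -> forall (p0 : P) (l : {x : V | x \in C}),
     \sum_(p : lab C | p l == p0) yc C p = yv (val l) p0).

Definition LP_obj (yc : forall C : {set V}, lab C -> R) : R :=
  \sum_(C in Cs) \sum_(d in Dc C) theta d * yc C d.

End Defs.

From mathcomp Require Import all_boot all_order all_algebra.
From mathcomp Require Import ring lra.
Set Implicit Arguments. Unset Strict Implicit. Unset Printing Implicit Defensive.
Import Order.TTheory GRing.Theory Num.Theory.
Local Open Scope ring_scope.

(* The common value is the minimum, over stochastic [x], of the relaxed energy
   [F x = sum_C sum_(d in D_C) theta_(C,d) * min_(l in C) x_(l, d_l)].

   LP side: since [theta <= 0], a feasible point costs at least [F] of its unary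
   part.  Conversely every stochastic [x] lifts to a feasible point of cost
   [F x]: each pattern [d] gets mass [min_l x_(l, d_l)], these masses never
   meet in a marginal by the Potts property, and the remaining mass of a clique
   is spread as the product of the normalized residual marginals.

   Dual side: by the coarea formula, [F x] is an average of the Lagrangian over
   the threshold labelings [x >= t], where the multiplier terms average to
   zero; hence [D lam <= F x].  Conversely, LP duality applied to
   [max sum_k w_k u_k] subject to [u_k <= x_(l, d_l)], [u_k <= 1] and [x]
   stochastic yields an optimal [x] together with multipliers that bound the
   Lagrangian from below at every binary point, hence some [lam] with
   [F x <= D lam].  Farkas' lemma is proved by Fourier-Motzkin elimination. *)

Section FourierMotzkin.
Variables (R : realFieldType) (I : finType) (al : I -> R).

(* The rows of a system after eliminating a variable with coefficients [al]:
   rows with [al i = 0] are kept, and every pair of a positive row [i] and a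
   negative row [j] is combined with weights [- al j] and [al i], so that the
   variable cancels. *)
Definition fm_row (g : I -> R) (x : I + I * I) : R :=
  match x with
  | inl i => if al i == 0 then g i else 0
  | inr (i, j) => if (0 < al i) && (al j < 0) then - al j * g i + al i * g j else 0
  end.

(* The multipliers on the original rows that a combination of eliminated rows
   with coefficients [c] amounts to. *)
Definition fm_pullback (c : I + I * I -> R) (i : I) : R :=
  (if al i == 0 then c (inl i) else 0)
  + \sum_j (if (0 < al i) && (al j < 0) then c (inr (i, j)) * - al j else 0)
  + \sum_j (if (0 < al j) && (al i < 0) then c (inr (j, i)) * al j else 0).

Lemma fm_row_eliminated x : fm_row al x = 0.
Proof.
case: x => [i|[i j]] /=; first by case: eqP.
by case: ifP => // _; rewrite mulNr mulrC addNr.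
Qed.

Lemma fm_row_sum m (f : I -> 'I_m -> R) (y : 'I_m -> R) x :
  \sum_k fm_row (f^~ k) x * y k = fm_row (fun i => \sum_k f i k * y k) x.
Proof.
case: x => [i|[i j]] /=; case: ifP => _ //;
  try by rewrite big1 // => k _; rewrite mul0r.
under eq_bigr do rewrite mulrDl -!mulrA.
by rewrite big_split -!mulr_sumr.
Qed.

Lemma sum_fm_pullback c g :
  \sum_i fm_pullback c i * g i = \sum_x c x * fm_row g x.
Proof.
rewrite big_sumType /=.
have -> : \sum_(p : I * I) c (inr p) * fm_row g (inr p) =
    \sum_i \sum_j c (inr (i, j)) * fm_row g (inr (i, j)).
  by rewrite pair_bigA; apply: eq_bigr => -[].
under eq_bigr do rewrite !mulrDl.
rewrite !big_split /= -addrA; congr (_ + _).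
  by apply: eq_bigr => i _; case: ifP => _; rewrite ?mul0r ?mulr0.
under [X in X + _]eq_bigr do rewrite mulr_suml.
under [X in _ + X]eq_bigr do rewrite mulr_suml.
rewrite [X in _ + X]exchange_big /= -big_split /=.
apply: eq_bigr => i _; rewrite -big_split /=; apply: eq_bigr => j _.
by case: ifP => _; rewrite ?mul0r ?mulr0 ?addr0 //; ring.
Qed.

Lemma fm_pullback_ge0 c : (forall x, 0 <= c x) -> forall i, 0 <= fm_pullback c i.
Proof.
move=> c_ge0 i; rewrite /fm_pullback; apply: addr_ge0; [apply: addr_ge0|].
- by case: ifP.
- apply: sumr_ge0 => j _; case: ifP => // /andP[_ alj].
  by apply: mulr_ge0; rewrite // oppr_ge0 ltW.
- apply: sumr_ge0 => j _; case: ifP => // /andP[alj _].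
  by apply: mulr_ge0; rewrite // ltW.
Qed.

(* The eliminated variable can be chosen between the bounds imposed by the
   negative rows and those imposed by the positive rows. *)
Lemma fm_extend (s b : I -> R) :
  (forall x, fm_row s x <= fm_row b x) -> exists t, forall i, s i + al i * t <= b i.
Proof.
move=> sb.
pose u i := (b i - s i) / al i.
have al_u i : al i != 0 -> al i * u i = b i - s i by move=> ?; rewrite mulrC divfK.
pose t0 := \big[Num.max/0]_(j | al j < 0) u j.
exists (\big[Num.min/t0]_(i | 0 < al i) u i) => i.
set t := \big[Num.min/t0]_(i | _) _.
case: (ltrgtP (al i) 0) => ali.
- have ui_le_t : u i <= t.
    apply: le_bigmin => [|j alj]; first exact: le_bigmax_cond.
    have := sb (inr (j, i)); rewrite /= alj ali /= => sbji.
    have : 0 <= al i * al j * (u i - u j).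
      have -> : al i * al j * (u i - u j) = al j * (al i * u i) - al i * (al j * u j)
        by ring.
      by rewrite !al_u ?(lt_eqF ali) ?(gt_eqF alj) // !mulrBr; lra.
    by rewrite nmulr_rge0 ?pmulr_llt0 // subr_le0.
  have : al i * t <= al i * u i by rewrite ler_wnM2l // ltW.
  rewrite al_u ?lt_eqF //; lra.
- have : al i * t <= al i * u i by rewrite ler_wpM2l ?bigmin_le_cond // ltW.
  rewrite al_u ?gt_eqF //; lra.
- by have := sb (inl i); rewrite /= ali eqxx mul0r addr0.
Qed.

End FourierMotzkin.

Section Farkas.
Variable R : realFieldType.

Lemma farkas_ord n (I : finType) (a : I -> 'I_n -> R) (b : I -> R) :
  (exists x, forall i, \sum_k a i k * x k <= b i) \/
  (exists c : I -> R, (forall i, 0 <= c i) /\ (forall k, \sum_i c i * a i k = 0)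
      /\ \sum_i c i * b i < 0).
Proof.
elim: n I a b => [|n IH] I a b.
  have [b_ge0|] := boolP [forall i, 0 <= b i].
    by left; exists (fun _ => 0) => i; rewrite big_ord0; apply: (forallP b_ge0).
  rewrite negb_forall => /existsP [i0]; rewrite -ltNge => bi0.
  right; exists (fun i => (i == i0)%:R); split => [i|]; first by rewrite ler0n.
  split; first by case.
  by rewrite (bigD1 i0) //= eqxx mul1r big1 ?addr0 // => i /negbTE ->; rewrite mul0r.
pose al i := a i ord_max.
pose a' i k := a i (lift ord_max k).
have [[x' x'_sol]|[c [c_ge0 [ca cb]]]] :=
  IH _ (fun x k => fm_row al (a'^~ k) x) (fm_row al b).
- have sol' x : fm_row al (fun i => \sum_k a' i k * x' k) x <= fm_row al b x.
    by rewrite -fm_row_sum; exact: x'_sol.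
  have [t t_sol] := fm_extend sol'.
  left; exists (fun k => if unlift ord_max k is Some k' then x' k' else t) => i.
  rewrite (bigD1_ord ord_max) //= unlift_none addrC.
  by under eq_bigr do rewrite liftK; exact: t_sol.
- right; exists (fm_pullback al c); split; first exact: fm_pullback_ge0.
  split; last by rewrite sum_fm_pullback.
  move=> k; rewrite sum_fm_pullback; case: (unliftP ord_max k) => [k' ->|->].
    exact: ca.
  by rewrite big1 // => x _; rewrite fm_row_eliminated mulr0.
Qed.

Lemma farkas (I W : finType) (a : I -> W -> R) (b : I -> R) :
  (exists x, forall i, \sum_k a i k * x k <= b i) \/
  (exists c : I -> R, (forall i, 0 <= c i) /\ (forall k, \sum_i c i * a i k = 0)
      /\ \sum_i c i * b i < 0).
Proof.
have reindex_enum (F : W -> R) : \sum_k F k = \sum_(k < #|W|) F (enum_val k).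
  by rewrite (reindex (fun k : 'I_#|W| => enum_val k)) //; apply: onW_bij; exact: enum_val_bij.
have [[x sol]|[c [c_ge0 [ca cb]]]] :=
  farkas_ord (fun i (k : 'I_#|W|) => a i (enum_val k)) b.
- left; exists (fun k => x (enum_rank k)) => i.
  by rewrite reindex_enum; under eq_bigr do rewrite enum_valK; exact: sol.
- by right; exists c; do 2!split => //; move=> k; rewrite -(enum_rankK k).
Qed.

End Farkas.

Section BigSums.
Variable R : pzRingType.

Lemma sum_delta_l (T : finType) (q : T -> R) k : \sum_i (i == k)%:R * q i = q k.
Proof.
rewrite (bigD1 k) //= eqxx mul1r big1 ?addr0 // => i /negbTE ->; exact: mul0r.
Qed.

Lemma sum_delta_r (T : finType) (q : T -> R) k : \sum_i q i * (i == k)%:R = q k.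
Proof.
rewrite (bigD1 k) //= eqxx mulr1 big1 ?addr0 // => i /negbTE ->; exact: mulr0.
Qed.

Lemma sum_mul0r (T : finType) (q : T -> R) : \sum_i 0 * q i = 0.
Proof. by rewrite big1 // => i _; rewrite mul0r. Qed.

Lemma sum_mulr0 (T : finType) (q : T -> R) : \sum_i q i * 0 = 0.
Proof. by rewrite big1 // => i _; rewrite mulr0. Qed.

Lemma sum_sum3 (T1 T2 T3 : finType) (F : (T1 + T2) + T3 -> R) :
  \sum_x F x = \sum_i F (inl (inl i)) + \sum_j F (inl (inr j)) + \sum_k F (inr k).
Proof. by rewrite !big_sumType. Qed.

End BigSums.

Section LPDuality.
Variables (R : realFieldType) (I J : finType).
Variables (A : I -> J -> R) (b : I -> R) (c : J -> R).

Definition primal_feasible (z : J -> R) := forall i, \sum_j A i j * z j <= b i.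

Definition dual_feasible (y : I -> R) :=
  (forall i, 0 <= y i) /\ forall j, \sum_i y i * A i j = c j.

Definition lp_optimal_pair z y :=
  [/\ primal_feasible z, dual_feasible y & \sum_i y i * b i <= \sum_j c j * z j].

(* The system in the unknowns [inl z] and [inr y] stating primal feasibility,
   dual feasibility and [y.b <= c.z]; its rows are [A z <= b], [- y <= 0],
   [y A <= c], [- y A <= - c] and [- c.z + y.b <= 0]. *)
Definition duality_row (r : ((I + I) + (J + J)) + 'I_1) (w : J + I) : R :=
  match r, w with
  | inl (inl (inl i)), inl j => A i j
  | inl (inl (inr i)), inr i' => - (i' == i)%:R
  | inl (inr (inl j)), inr i => A i j
  | inl (inr (inr j)), inr i => - A i j
  | inr _, inl j => - c j
  | inr _, inr i => b i
  | _, _ => 0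
  end.

Definition duality_rhs (r : ((I + I) + (J + J)) + 'I_1) : R :=
  match r with
  | inl (inl (inl i)) => b i
  | inl (inr (inl j)) => c j
  | inl (inr (inr j)) => - c j
  | _ => 0
  end.

Lemma duality_system_solution (x : J + I -> R) :
  (forall r, \sum_w duality_row r w * x w <= duality_rhs r) ->
  lp_optimal_pair (x \o inl) (x \o inr).
Proof.
move=> sol.
have row r : \sum_j duality_row r (inl j) * x (inl j)
    + \sum_i duality_row r (inr i) * x (inr i) <= duality_rhs r.
  by have := sol r; rewrite big_sumType.
split.
- move=> i; have := row (inl (inl (inl i))).
  by rewrite /= sum_mul0r addr0.
- split=> [i|j].
    have := row (inl (inl (inr i))); rewrite /= sum_mul0r add0r.
    by under eq_bigr do rewrite mulNr; rewrite sumrN sum_delta_l oppr_le0.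
  apply: le_anti; have := row (inl (inr (inl j))); have := row (inl (inr (inr j))).
  rewrite /= !sum_mul0r !add0r.
  under eq_bigr do rewrite mulNr; rewrite sumrN lerN2 => ge le.
  by under eq_bigr do rewrite mulrC; rewrite le ge.
- have := row (inr ord0); rewrite /=.
  under eq_bigr do rewrite mulNr; rewrite sumrN.
  under [X in _ + X <= _]eq_bigr do rewrite mulrC.
  by rewrite addrC subr_le0.
Qed.

(* Rescaled by [s], such a certificate is itself a pair of feasible points,
   with even [y.b < c.z]. *)
Lemma duality_certificate_pos (p q : I -> R) (r : J -> R) (s : R) :
  0 < s -> (forall i, 0 <= p i) -> (forall i, 0 <= q i) ->
  (forall j, \sum_i p i * A i j = s * c j) ->
  (forall i, \sum_j r j * A i j = q i - s * b i) ->
  \sum_i p i * b i + \sum_j r j * c j < 0 ->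
  lp_optimal_pair (fun j => - r j / s) (fun i => p i / s).
Proof.
move=> s_gt0 p_ge0 q_ge0 pA rA pbrc; have s_neq0 : s != 0 by rewrite gt_eqF.
split.
- move=> i; have -> : \sum_j A i j * (- r j / s) = - (\sum_j r j * A i j) / s.
    by rewrite mulNr mulr_suml -sumrN; apply: eq_bigr => j _; ring.
  rewrite rA opprB mulrBl mulrAC divff // mul1r lerBlDr lerDl.
  by rewrite divr_ge0 // ltW.
- split=> [i|j]; first by rewrite divr_ge0 // ltW.
  by under eq_bigr do rewrite mulrAC; rewrite -mulr_suml pA mulrAC divff ?mul1r.
- have -> : \sum_i p i / s * b i = (\sum_i p i * b i) / s.
    by rewrite mulr_suml; apply: eq_bigr => i _; ring.
  have -> : \sum_j c j * (- r j / s) = - (\sum_j r j * c j) / s.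
    by rewrite mulNr mulr_suml -sumrN; apply: eq_bigr => j _; ring.
  by rewrite ler_pM2r ?invr_gt0 //; lra.
Qed.

Lemma duality_certificate_zero (p q : I -> R) (r : J -> R) :
  (exists z, primal_feasible z) -> (exists y, dual_feasible y) ->
  (forall i, 0 <= p i) -> (forall i, 0 <= q i) ->
  (forall j, \sum_i p i * A i j = 0) ->
  (forall i, \sum_j r j * A i j = q i) ->
  0 <= \sum_i p i * b i + \sum_j r j * c j.
Proof.
move=> [z zP] [y [y_ge0 yA]] p_ge0 q_ge0 pA rA; apply: addr_ge0.
- apply: le_trans (_ : \sum_i p i * \sum_j A i j * z j <= _).
    under eq_bigr do rewrite mulr_sumr.
    rewrite exchange_big /= big1 // => j _.
    by under eq_bigr do rewrite mulrA; rewrite -mulr_suml pA mul0r.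
  by apply: ler_sum => i _; apply: ler_wpM2l.
- under eq_bigr do rewrite -yA mulr_sumr.
  rewrite exchange_big /=; apply: sumr_ge0 => i _.
  under eq_bigr do rewrite mulrCA.
  by rewrite -mulr_sumr rA mulr_ge0.
Qed.

Lemma duality_certificate (cf : ((I + I) + (J + J)) + 'I_1 -> R) :
  (exists z, primal_feasible z) -> (exists y, dual_feasible y) ->
  (forall r, 0 <= cf r) -> (forall w, \sum_r cf r * duality_row r w = 0) ->
  \sum_r cf r * duality_rhs r < 0 -> exists z y, lp_optimal_pair z y.
Proof.
move=> primal dual cf_ge0 cf_row cf_rhs.
pose p i := cf (inl (inl (inl i))); pose q i := cf (inl (inl (inr i))).
pose r j := cf (inl (inr (inl j))) - cf (inl (inr (inr j))); pose s := cf (inr ord0).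
have colz j : \sum_i p i * A i j = s * c j.
  have := cf_row (inl j); rewrite sum_sum3 !big_sumType /= !sum_mulr0 !addr0.
  by rewrite big_ord1 mulrN => /subr0_eq.
have coly i : \sum_j r j * A i j = q i - s * b i.
  have := cf_row (inr i); rewrite sum_sum3 !big_sumType /= sum_mulr0 add0r.
  under eq_bigr do rewrite mulrN eq_sym; rewrite sumrN sum_delta_r big_ord1.
  under [X in _ + (_ + X) + _]eq_bigr do rewrite mulrN; rewrite sumrN => row.
  by rewrite /r; under eq_bigr do rewrite mulrBl; rewrite sumrB /q /s; lra.
have rhs : \sum_i p i * b i + \sum_j r j * c j < 0.
  move: cf_rhs; rewrite sum_sum3 !big_sumType /= sum_mulr0 addr0 big_ord1 mulr0 addr0.
  under [X in _ + (_ + X) < _]eq_bigr do rewrite mulrN; rewrite sumrN => rhs.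
  by rewrite /r; under [X in _ + X]eq_bigr do rewrite mulrBl; rewrite sumrB /p; lra.
have [s_lt0|s_gt0|s0] := ltrgtP s 0.
- by have := cf_ge0 (inr ord0); rewrite -/s leNgt s_lt0.
- by do 2!eexists; apply: duality_certificate_pos s_gt0 _ _ colz coly rhs => i; apply: cf_ge0.
- suff : 0 <= \sum_i p i * b i + \sum_j r j * c j by rewrite leNgt rhs.
  apply: (duality_certificate_zero (q := q) primal dual) => [i|i|j|i];
    rewrite ?cf_ge0 //.
    by rewrite colz s0 mul0r.
  by rewrite coly s0 mul0r subr0.
Qed.

Lemma lp_strong_duality :
  (exists z, primal_feasible z) -> (exists y, dual_feasible y) ->
  exists z y, lp_optimal_pair z y.
Proof.
move=> primal dual.
have [[x sol]|[cf [cf_ge0 [cf_row cf_rhs]]]] := farkas duality_row duality_rhs.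
- by exists (x \o inl), (x \o inr); exact: duality_system_solution.
- exact: duality_certificate cf_row cf_rhs.
Qed.

End LPDuality.

Section ThresholdDecomposition.
Variable R : realFieldType.

Fixpoint threshold_steps (x0 : R) (s : seq R) : seq (R * R) :=
  if s is v :: s' then (v - x0, v) :: threshold_steps v s' else [::].

Lemma threshold_steps_level x0 s w : w \in threshold_steps x0 s -> w.2 \in s.
Proof.
elim: s x0 => [|v s IH] x0 //=; rewrite !inE => /orP[/eqP -> //|/IH ->].
  by rewrite eqxx.
by rewrite orbT.
Qed.

Lemma threshold_steps_weight_ge0 x0 s w :
  path <%R x0 s -> w \in threshold_steps x0 s -> 0 <= w.1.
Proof.
elim: s x0 => [|v s IH] x0 //= /andP[x0v sorted_s].
by rewrite inE => /orP[/eqP -> /=|/(IH _ sorted_s) //]; rewrite subr_ge0 ltW.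
Qed.

Lemma sum_threshold_steps (a : R) x0 s : path <%R x0 s -> x0 <= a -> a \in x0 :: s ->
  \sum_(w <- threshold_steps x0 s) w.1 * (w.2 <= a)%R%:R = a - x0.
Proof.
elim: s x0 => [|v s IH] x0 /=.
  by move=> _ _; rewrite inE => /eqP ->; rewrite big_nil subrr.
move=> /andP[x0v sorted_s] x0a a_in; rewrite big_cons /=.
have above_v w : w \in s -> v < w.
  by move: w; apply/allP; exact: order_path_min lt_trans sorted_s.
have [va|av] := leP v a.
  rewrite mulr1 IH //; first lra.
  by move: a_in; rewrite inE => /orP[/eqP a0|//]; lra.
have a0 : a = x0.
  move: a_in; rewrite !inE => /orP[/eqP //|/orP[/eqP av'|/above_v]]; lra.
rewrite mulr0 add0r big1_seq => [|w /andP[_ /threshold_steps_level/above_v vw]].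
  by rewrite a0 subrr.
by rewrite leNgt (lt_trans av vw) mulr0.
Qed.

(* A finite coarea formula. *)
Lemma threshold_decomposition (vals : seq R) : all (fun a => 0 <= a <= 1) vals ->
  exists ts : seq (R * R), [/\ forall w, w \in ts -> 0 <= w.1,
    \sum_(w <- ts) w.1 = 1 &
    forall a, a \in vals -> \sum_(w <- ts) w.1 * (w.2 <= a)%R%:R = a].
Proof.
move=> /allP vals01.
pose s := sort <=%R (undup (1 :: [seq a <- vals | 0 < a])).
have s01 v : v \in s -> 0 < v <= 1.
  rewrite mem_sort mem_undup inE => /orP[/eqP ->|]; first by rewrite ltr01 lexx.
  by rewrite mem_filter => /andP[-> /vals01 /andP[]].
have sorted_s : path <%R 0 s.
  rewrite path_sortedE; last exact: lt_trans.
  by rewrite sort_lt_sorted undup_uniq andbT; apply/allP => v /s01 /andP[].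
have sum_steps a : 0 <= a -> a \in 0 :: s ->
    \sum_(w <- threshold_steps 0 s) w.1 * (w.2 <= a)%R%:R = a.
  by move=> a_ge0 a_in; rewrite sum_threshold_steps // subr0.
exists (threshold_steps 0 s); split.
- by move=> w; apply: threshold_steps_weight_ge0.
- rewrite -[RHS](sum_steps 1) ?ler01 ?inE ?mem_sort ?mem_undup ?inE ?eqxx ?orbT //.
  apply: eq_big_seq => w /threshold_steps_level /s01 /andP[_ ->]; exact: esym (mulr1 _).
- move=> a a_in; have /andP[a_ge0 _] := vals01 a a_in; apply: sum_steps => //.
  rewrite inE; have [//|a_neq0] := eqVneq a 0.
  by rewrite mem_sort mem_undup inE mem_filter a_in lt_def a_neq0 a_ge0 orbT.
Qed.

End ThresholdDecomposition.

Section Relaxation.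
Variables (R : realFieldType) (V P : finType).
Variables (Cs : {set {set V}}) (Dc : forall C : {set V}, {set lab P C})
          (theta : forall C : {set V}, lab P C -> R).

Definition label_min (x : V -> P -> R) C (d : lab P C) : R :=
  \big[Num.min/1]_(l : {v : V | v \in C}) x (val l) (d l).

(* The LP objective once every [y_{C,d}] is as large as the constraints
   [y_{C,d} <= y_{l d_l}] allow; since [theta <= 0] this is optimal. *)
Definition relaxed_energy (x : V -> P -> R) : R :=
  \sum_(C in Cs) \sum_(d in Dc C) theta d * label_min x d.

Definition stochastic (x : V -> P -> R) : Prop :=
  (forall i p, 0 <= x i p) /\ (forall i, \sum_p x i p = 1).

Lemma stochastic_le1 x : stochastic x -> forall i p, x i p <= 1.
Proof.
move=> [x_ge0 x_sum1] i p; rewrite -(x_sum1 i) (bigD1 p) //= lerDl.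
by apply: sumr_ge0 => q _; apply: x_ge0.
Qed.

Lemma label_min_le x C (d : lab P C) l : label_min x d <= x (val l) (d l).
Proof. exact: bigmin_le. Qed.

Lemma label_min_ge0 x C (d : lab P C) : stochastic x -> 0 <= label_min x d.
Proof. by move=> [x_ge0 _]; apply: le_bigmin. Qed.

Lemma label_min_le1 x C (d : lab P C) : label_min x d <= 1.
Proof. exact: bigmin_le_id. Qed.

Lemma relaxed_energy_le_LP_obj yv yc :
  (forall C, C \in Cs -> forall d, d \in Dc C -> theta d <= 0) ->
  LP_feasible Cs Dc yv yc -> relaxed_energy yv <= LP_obj Cs Dc theta yc.
Proof.
move=> theta_le0 [_ [yc01 [yc_le _]]].
apply: ler_sum => C CCs; apply: ler_sum => d dDc.
apply: ler_wnM2l; first exact: theta_le0.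
by apply: le_bigmin => [|l _]; [case/andP: (yc01 C CCs d) | apply: yc_le].
Qed.

Lemma LP_feasible_stochastic yv yc : LP_feasible Cs Dc yv yc -> stochastic yv.
Proof. by case=> yv01 [_ [_ [yv_sum1 _]]]; split=> // i p; case/andP: (yv01 i p). Qed.

Lemma Ddual_le_Lag lam y z : Ddual Cs Dc theta lam <= Lag Cs Dc theta lam y z.
Proof.
exact: le_trans (bigmin_le _ y _) (bigmin_le _ z _).
Qed.

Lemma le_Ddual lam m : (forall y z, m <= Lag Cs Dc theta lam y z) ->
  m <= Ddual Cs Dc theta lam.
Proof.
by move=> m_le; apply: le_bigmin => [|y _]; last apply: le_bigmin => [|z _].
Qed.

Definition threshold_y (x : V -> P -> R) t : ybin V P :=
  [ffun ip => (t <= x ip.1 ip.2)%R].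

Definition threshold_z (x : V -> P -> R) t : zbin V P :=
  [ffun C => [ffun d => (t <= label_min x d)%R]].

(* A clique is active at level [t] exactly when all its labels are, so the
   bracket in [EstarI] collapses to [- 1] or [0]. *)
Lemma Lag_threshold lam x t :
  Lag Cs Dc theta lam (threshold_y x t) (threshold_z x t) =
  \sum_(C in Cs) \sum_(d in Dc C) theta d * (t <= label_min x d)%R%:R
  + \sum_i lam i * (\sum_p (t <= x i p)%R%:R - 1).
Proof.
rewrite /Lag /EstarI; congr (_ + _); last first.
  by apply: eq_bigr => i _; congr (_ * (_ - _)); apply: eq_bigr => p _; rewrite ffunE.
rewrite -sumrN; apply: eq_bigr => C _; rewrite -sumrN; apply: eq_bigr => d _.
rewrite !ffunE; have [t_le|_] := boolP (t <= label_min x d)%R; last first.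
  by rewrite !mulr0 big1 ?subr0 ?mulr0 ?oppr0 // => l _; rewrite mulr0.
rewrite (eq_bigr (fun _ => 1)) => [|l _]; last first.
  by rewrite ffunE /= mulr1 (le_trans t_le (label_min_le x d l)).
rewrite sumr_const card_sig (eq_card (B := C)) // mulr1 -mulrN mulr1n.
by congr (_ * _); lra.
Qed.

Lemma average_threshold_Lag lam x (ts : seq (R * R)) :
  stochastic x -> \sum_(w <- ts) w.1 = 1 ->
  (forall i p, \sum_(w <- ts) w.1 * (w.2 <= x i p)%R%:R = x i p) ->
  (forall C (d : lab P C), \sum_(w <- ts) w.1 * (w.2 <= label_min x d)%R%:R = label_min x d) ->
  \sum_(w <- ts) w.1 * Lag Cs Dc theta lam (threshold_y x w.2) (threshold_z x w.2) =
  relaxed_energy x.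
Proof.
move=> [_ x_sum1] ts_sum1 ts_x ts_min.
have lam_part :
    \sum_(w <- ts) w.1 * \sum_i lam i * (\sum_p (w.2 <= x i p)%R%:R - 1) = 0.
  under eq_bigr do rewrite mulr_sumr.
  rewrite exchange_big big1 // => i _.
  under eq_bigr do rewrite mulrCA.
  rewrite -mulr_sumr; under eq_bigr do rewrite mulrBr mulr1.
  rewrite sumrB ts_sum1; under eq_bigr do rewrite mulr_sumr.
  by rewrite exchange_big /=; under eq_bigr do rewrite ts_x; rewrite x_sum1 subrr mulr0.
have energy_part : \sum_(w <- ts) w.1 *
    (\sum_(C in Cs) \sum_(d in Dc C) theta d * (w.2 <= label_min x d)%R%:R) =
    relaxed_energy x.
  under eq_bigr do rewrite mulr_sumr.
  rewrite exchange_big; apply: eq_bigr => C _.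
  under eq_bigr do rewrite mulr_sumr.
  rewrite exchange_big; apply: eq_bigr => d _.
  rewrite -[in RHS]ts_min mulr_sumr; apply: eq_bigr => w _; exact: mulrCA.
under eq_bigr do rewrite Lag_threshold mulrDr.
by rewrite big_split /= lam_part addr0 energy_part.
Qed.

Lemma Ddual_le_relaxed_energy lam x :
  stochastic x -> Ddual Cs Dc theta lam <= relaxed_energy x.
Proof.
move=> x_stoch.
pose vals := [seq x ip.1 ip.2 | ip <- enum {: V * P}] ++
             [seq label_min x (tagged Cd) | Cd <- enum {: {C : {set V} & lab P C}}].
have vals01 : all (fun a => 0 <= a <= 1) vals.
  apply/allP => a; rewrite mem_cat => /orP[] /mapP [k _ ->].
    by rewrite (stochastic_le1 x_stoch) andbT; case: x_stoch.
  by rewrite label_min_ge0 ?label_min_le1.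
have [ts [ts_ge0 ts_sum1 ts_vals]] := threshold_decomposition vals01.
rewrite -(average_threshold_Lag lam x_stoch ts_sum1).
- rewrite -[X in X <= _]mul1r -ts_sum1 mulr_suml big_seq [X in _ <= X]big_seq.
  by apply: ler_sum => w w_ts; rewrite ler_wpM2l ?ts_ge0 ?Ddual_le_Lag.
- move=> i p; apply: ts_vals; rewrite mem_cat; apply/orP; left.
  by apply/mapP; exists (i, p); rewrite ?mem_enum.
- move=> C d; apply: ts_vals; rewrite mem_cat; apply/orP; right.
  by apply/mapP; exists (Tagged (lab P) d); rewrite ?mem_enum.
Qed.

End Relaxation.

Lemma sum_ffun_prod_fixed (R : comPzRingType) (L P : finType) (f : L -> P -> R) l q :
  \sum_(p : {ffun L -> P} | p l == q) \prod_l' f l' (p l') =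
  \prod_l' (if l' == l then f l q else \sum_q' f l' q').
Proof.
pose g l' q' := if l' == l then (q' == q)%:R * f l' q' else f l' q'.
have -> : \prod_l' (if l' == l then f l q else \sum_q' f l' q') = \prod_l' \sum_q' g l' q'.
  apply: eq_bigr => l' _; rewrite /g; have [->|//] := eqVneq l' l.
  by rewrite (bigD1 q) //= eqxx mul1r big1 ?addr0 // => q' /negbTE ->; rewrite mul0r.
rewrite bigA_distr_bigA big_mkcond /=; apply: eq_bigr => p _.
rewrite (bigD1 l) //= [in RHS](bigD1 l) //= /g eqxx.
rewrite [in RHS](eq_bigr (fun l' => f l' (p l'))) => [|l' /negbTE -> //].
by case: (p l == q); rewrite ?mul1r ?mul0r.
Qed.

Section PottsLift.
Variables (R : realFieldType) (V P : finType).
Variables (Cs : {set {set V}}) (Dc : forall C : {set V}, {set lab P C}).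
Variable x : V -> P -> R.
Hypothesis x_stoch : stochastic x.
Hypothesis Cs_neq0 : forall C, C \in Cs -> C != set0.
Hypothesis Dc_potts : forall C, C \in Cs -> forall d1 d2, d1 \in Dc C -> d2 \in Dc C ->
  d1 != d2 -> forall i : {v : V | v \in C}, d1 i != d2 i.

Definition pattern_mass (C : {set V}) (l : {v : V | v \in C}) q : R :=
  \sum_(d in Dc C | d l == q) label_min x d.

Definition residual (C : {set V}) (l : {v : V | v \in C}) q : R :=
  x (val l) q - pattern_mass l q.

Definition residual_total (C : {set V}) : R := 1 - \sum_(d in Dc C) label_min x d.

Definition potts_lift (C : {set V}) (p : lab P C) : R :=
  (if p \in Dc C then label_min x p else 0)
  + (if residual_total C == 0 then 0
     else residual_total C * \prod_l (residual l (p l) / residual_total C)).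

Section Clique.
Variable C : {set V}.
Hypothesis C_Cs : C \in Cs.

(* By the Potts property, at most one pattern uses label [d l] at [l]. *)
Lemma pattern_mass_pattern (d : lab P C) l :
  d \in Dc C -> pattern_mass l (d l) = label_min x d.
Proof.
move=> dDc; rewrite /pattern_mass (big_pred1 d) // => d' /=.
have [->|d'd] := eqVneq d' d; first by rewrite dDc eqxx.
by have [d'Dc|] //= := boolP (d' \in Dc C); apply/negbTE; apply: Dc_potts.
Qed.

Lemma residual_ge0 (l : {v : V | v \in C}) q : 0 <= residual l q.
Proof.
rewrite subr_ge0; case: (pickP (fun d : lab P C => (d \in Dc C) && (d l == q))).
  by move=> d /andP[dDc /eqP <-]; rewrite pattern_mass_pattern ?label_min_le.
by move=> none; rewrite /pattern_mass big_pred0 //; case: x_stoch.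
Qed.

Lemma sum_residual (l : {v : V | v \in C}) : \sum_q residual l q = residual_total C.
Proof.
rewrite sumrB; case: x_stoch => _ ->; congr (_ - _).
by rewrite [RHS](partition_big (fun d : lab P C => d l) predT).
Qed.

Lemma clique_inhabited : inhabited {v : V | v \in C}.
Proof. by have /set0Pn [v vC] := Cs_neq0 C_Cs; exists; exists v. Qed.

Lemma residual_total_ge0 : 0 <= residual_total C.
Proof.
have [l] := clique_inhabited; rewrite -(sum_residual l).
by apply: sumr_ge0 => q _; apply: residual_ge0.
Qed.

Lemma potts_lift_ge0 (p : lab P C) : 0 <= potts_lift p.
Proof.
apply: addr_ge0; first by case: ifP => // _; apply: label_min_ge0.
case: eqP => // _; apply: mulr_ge0; first exact: residual_total_ge0.
by apply: prodr_ge0 => l _; rewrite divr_ge0 ?residual_ge0 ?residual_total_ge0.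
Qed.

Lemma potts_lift_marginal (l : {v : V | v \in C}) q :
  \sum_(p : lab P C | p l == q) potts_lift p = x (val l) q.
Proof.
rewrite big_split /= -[RHS](subrKC (pattern_mass l q)); congr (_ + _).
  rewrite /pattern_mass big_mkcond [in RHS]big_mkcond /=; apply: eq_bigr => p _.
  by case: (p \in Dc C); case: (p l == q).
case: eqP => [res0|/eqP res_neq0].
  have sum0 : \sum_q residual l q = 0 by rewrite sum_residual res0.
  rewrite big1 //; exact/esym/(psumr_eq0P (fun q _ => residual_ge0 l q) sum0 (i := q)).
rewrite -mulr_sumr (sum_ffun_prod_fixed (fun l' q' => residual l' q' / residual_total C)).
rewrite (bigD1 l) //= eqxx big1 ?mulr1 => [|l' /negbTE ->].
  by rewrite mulrC divfK.
by rewrite -mulr_suml sum_residual divff.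
Qed.

(* Some label of a pattern attains its minimum, so that label has zero
   residual and the product part vanishes on patterns. *)
Lemma potts_lift_pattern (d : lab P C) : d \in Dc C -> potts_lift d = label_min x d.
Proof.
move=> dDc; rewrite /potts_lift dDc; case: eqP => _; first by rewrite addr0.
have [l0] := clique_inhabited.
have [l _ lmin] := @eq_bigmin _ _ {v : V | v \in C} 1 l0 xpredT
   (fun l => x (val l) (d l)) isT (fun l _ => stochastic_le1 x_stoch _ _).
rewrite (bigD1 l) //= /residual pattern_mass_pattern //.
by rewrite /label_min lmin subrr !mul0r mulr0 addr0.
Qed.

Lemma potts_lift_le (l : {v : V | v \in C}) (p : lab P C) :
  potts_lift p <= x (val l) (p l).
Proof.
rewrite -potts_lift_marginal (bigD1 p) //= lerDl.
by apply: sumr_ge0 => p' _; apply: potts_lift_ge0.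
Qed.

End Clique.

Lemma potts_lift_feasible : LP_feasible Cs Dc x potts_lift.
Proof.
have [x_ge0 x_sum1] := x_stoch.
split=> [i p|]; first by rewrite x_ge0 stochastic_le1.
split=> [C C_Cs p|].
  rewrite potts_lift_ge0 //=; have [l] := clique_inhabited C_Cs.
  exact: le_trans (potts_lift_le C_Cs l p) (stochastic_le1 x_stoch _ _).
split=> [C C_Cs d _ l|]; first exact: potts_lift_le.
by split=> // C C_Cs q l; apply: potts_lift_marginal.
Qed.

Lemma LP_obj_potts_lift theta : LP_obj Cs Dc theta potts_lift = relaxed_energy Cs Dc theta x.
Proof.
by apply: eq_bigr => C C_Cs; apply: eq_bigr => d dDc; rewrite potts_lift_pattern.
Qed.

End PottsLift.

Lemma clique_bracket_lower (R : realFieldType) (L : finType) (w be : R) (al : L -> R)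
    (y : L -> bool) (z : bool) :
  0 <= w -> 0 <= be -> (forall l, 0 <= al l) -> w <= \sum_l al l + be ->
  - be <= w * ((#|L|%:R - 1) * z%:R - \sum_l (y l)%:R * z%:R) + \sum_l al l * (y l)%:R.
Proof.
move=> w_ge0 be_ge0 al_ge0 w_le.
have T_ge0 : 0 <= \sum_l al l * (y l)%:R by apply: sumr_ge0 => l _; rewrite mulr_ge0.
case: z; last by rewrite mulr0 sum_mulr0 subr0 mulr0 add0r; lra.
under eq_bigr do rewrite mulr1; rewrite mulr1.
have [y1|/forallPn[l0 yl0]] := boolP [forall l, y l].
  under eq_bigr do rewrite (forallP y1).
  under [X in _ + X]eq_bigr do rewrite (forallP y1) mulr1.
  have -> : \sum_(l : L) (true%:R : R) = #|L|%:R by rewrite sumr_const.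
  rewrite addrAC subrr add0r mulrN1; lra.
suff : 0 <= #|L|%:R - 1 - \sum_l ((y l)%:R : R) by move/(mulr_ge0 w_ge0); lra.
rewrite subr_ge0 (bigD1 l0) //= (negbTE yl0) add0r.
apply: le_trans (_ : \sum_(l | l != l0) (1 : R) <= _).
  by apply: ler_sum => l _; rewrite lern1 leq_b1.
have L_gt0 : (0 < #|L|)%N by apply/card_gt0P; exists l0.
by rewrite sumr_const cardC1 -subn1 natrB.
Qed.

Lemma sum_sigT (R : nmodType) (I : finType) (T_ : I -> finType) (F : {i : I & T_ i} -> R) :
  \sum_p F p = \sum_i \sum_(t : T_ i) F (Tagged T_ t).
Proof.
by rewrite (sig_big_dep xpredT (fun _ => xpredT) (fun i t => F (Tagged T_ t)));
  apply: eq_bigr => -[].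
Qed.

Section LagrangianBound.
Variables (R : realFieldType) (V P : finType).
Variables (Cs : {set {set V}}) (Dc : forall C : {set V}, {set lab P C})
          (theta : forall C : {set V}, lab P C -> R).
Hypothesis theta_le0 : forall C, C \in Cs -> forall d, d \in Dc C -> theta d <= 0.

Definition clique_pattern := {C : {set V} & lab P C}.

Definition relevant (k : clique_pattern) := (tag k \in Cs) && (tagged k \in Dc (tag k)).

Definition weight (k : clique_pattern) : R := if relevant k then - theta (tagged k) else 0.

Definition incidence := {k : clique_pattern & {v : V | v \in tag k}}.

Definition incidence_of (k : clique_pattern) (l : {v : V | v \in tag k}) : incidence :=
  Tagged (fun k : clique_pattern => {v : V | v \in tag k}) l.

Definition incidence_point (kl : incidence) : V * P :=
  (val (tagged kl), tagged (tag kl) (tagged kl)).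

Definition load (al : incidence -> R) i p : R :=
  \sum_kl al kl * ((i, p) == incidence_point kl)%:R.

Lemma weight_ge0 k : 0 <= weight k.
Proof. by rewrite /weight; case: ifP => // /andP[? ?]; rewrite oppr_ge0 theta_le0. Qed.

Lemma sum_relevant (G : forall C, lab P C -> R) :
  \sum_(C in Cs) \sum_(d in Dc C) G C d = \sum_(k | relevant k) G (tag k) (tagged k).
Proof. exact: (sig_big_dep (fun C => C \in Cs) (fun C d => d \in Dc C) G). Qed.

Lemma EstarI_relevant y z : EstarI Cs Dc theta y z =
  \sum_(k | relevant k) weight k *
    ((#|tag k|%:R - 1) * (z (tag k) (tagged k))%:R
     - \sum_(l : {v : V | v \in tag k})
         (y (val l, tagged k l))%:R * (z (tag k) (tagged k))%:R).
Proof.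
rewrite /EstarI (sum_relevant (fun C d => theta d * ((#|C|%:R - 1) * (z C d)%:R
   - \sum_(l : {v : V | v \in C}) (y (val l, d l))%:R * (z C d)%:R))).
rewrite -sumrN; apply: eq_bigr => k k_rel.
by rewrite /weight k_rel mulNr.
Qed.

Lemma relaxed_energy_weight x : relaxed_energy Cs Dc theta x =
  - \sum_(k : clique_pattern) weight k * label_min x (tagged k).
Proof.
rewrite /relaxed_energy (sum_relevant (fun C d => theta d * label_min x d)).
rewrite [in RHS](bigID relevant) /= [X in _ + X]big1 => [|k /negbTE k_irr]; last first.
  by rewrite /weight k_irr mul0r.
by rewrite addr0 -sumrN; apply: eq_bigr => k k_rel; rewrite /weight k_rel mulNr opprK.
Qed.

Lemma sum_load al (y : ybin V P) :
  \sum_i \sum_p (y (i, p))%:R * load al i p =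
  \sum_(k : clique_pattern) \sum_(l : {v : V | v \in tag k})
    al (incidence_of l) * (y (val l, tagged k l))%:R.
Proof.
transitivity (\sum_kl al kl * (y (incidence_point kl))%:R); last by rewrite sum_sigT.
rewrite pair_bigA /=; under eq_bigr do rewrite mulr_sumr.
rewrite exchange_big /=; apply: eq_bigr => kl _.
under eq_bigr do rewrite mulrCA.
by rewrite -mulr_sumr; under eq_bigr do rewrite -surjective_pairing; rewrite sum_delta_r.
Qed.

(* Weak duality for the Lagrangian: feasible multipliers [al], [be] of the
   auxiliary linear program below bound [D(mu)] from below. *)
Lemma Lag_lower_bound (al : incidence -> R) (be : clique_pattern -> R) (mu : V -> R) :
  (forall kl, 0 <= al kl) -> (forall k, 0 <= be k) ->
  (forall k, relevant k ->
     weight k <= \sum_(l : {v : V | v \in tag k}) al (incidence_of l) + be k) ->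
  (forall i p, load al i p <= mu i) ->
  forall y z, - \sum_i mu i - \sum_k be k <= Lag Cs Dc theta mu y z.
Proof.
move=> al_ge0 be_ge0 w_le load_le y z.
pose T (k : clique_pattern) := \sum_(l : {v : V | v \in tag k})
  al (incidence_of l) * (y (val l, tagged k l))%:R.
have T_le : \sum_k T k <= \sum_i mu i * \sum_p (y (i, p))%:R.
  rewrite -sum_load; apply: ler_sum => i _; rewrite mulr_sumr; apply: ler_sum => p _.
  by rewrite mulrC ler_wpM2r ?ler0n.
have be_rel : \sum_(k | relevant k) be k <= \sum_k be k.
  by rewrite [X in _ <= X](bigID relevant) /= lerDl sumr_ge0.
have EstarI_ge : - \sum_(k | relevant k) be k <= EstarI Cs Dc theta y z + \sum_k T k.
  rewrite EstarI_relevant (bigID relevant xpredT T) /= addrA -big_split /= -sumrN.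
  apply: ler_wpDr; first by apply: sumr_ge0 => k _; apply: sumr_ge0 => l _;
    rewrite mulr_ge0 ?ler0n.
  apply: ler_sum => k k_rel.
  have := clique_bracket_lower (fun l => y (val l, tagged k l)) (z (tag k) (tagged k))
    (weight_ge0 k) (be_ge0 k) (fun l => al_ge0 (incidence_of l)) (w_le k k_rel).
  by rewrite card_sig (eq_card (B := tag k)).
rewrite /Lag; under [X in _ <= _ + X]eq_bigr do rewrite mulrBr mulr1.
rewrite sumrB; lra.
Qed.

End LagrangianBound.

Section AuxiliaryLP.
Variables (R : realFieldType) (V P : finType).
Variables (Cs : {set {set V}}) (Dc : forall C : {set V}, {set lab P C})
          (theta : forall C : {set V}, lab P C -> R).

(* The auxiliary program: maximize [sum_k weight k * u_k] over [x_{ip}], [u_k] s.t.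
   [- x_{ip} <= 0], [sum_p x_{ip} <= 1], [- sum_p x_{ip} <= - 1],
   [u_k - x_{l, d_l} <= 0] for [l] in the clique of [k = (C, d)], and [u_k <= 1]. *)
Definition aux_var := ((V * P) + clique_pattern V P)%type.
Definition aux_con := ((((V * P) + V) + (V + incidence V P)) + clique_pattern V P)%type.

Definition aux_A (r : aux_con) (j : aux_var) : R :=
  match r, j with
  | inl (inl (inl ip)), inl ip' => - (ip' == ip)%:R
  | inl (inl (inr i)), inl ip' => (ip'.1 == i)%:R
  | inl (inr (inl i)), inl ip' => - (ip'.1 == i)%:R
  | inl (inr (inr kl)), inl ip' => - (ip' == incidence_point kl)%:R
  | inl (inr (inr kl)), inr k' => (k' == tag kl)%:R
  | inr k, inr k' => (k' == k)%:R
  | _, _ => 0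
  end.

Definition aux_b (r : aux_con) : R :=
  match r with
  | inl (inl (inr _)) => 1
  | inl (inr (inl _)) => -1
  | inr _ => 1
  | _ => 0
  end.

Definition aux_c (j : aux_var) : R := if j is inr k then weight Cs Dc theta k else 0.

Lemma sum_aux_con (F : aux_con -> R) : \sum_r F r =
  \sum_ip F (inl (inl (inl ip))) + \sum_i F (inl (inl (inr i)))
  + (\sum_i F (inl (inr (inl i))) + \sum_kl F (inl (inr (inr kl)))) + \sum_k F (inr k).
Proof. by rewrite sum_sum3 !big_sumType. Qed.

Lemma sum_label_row (F : V * P -> R) i : \sum_ip (ip.1 == i)%:R * F ip = \sum_p F (i, p).
Proof.
rewrite -(sum_delta_l (fun i => \sum_p F (i, p))).
under [X in _ = X]eq_bigr do rewrite mulr_sumr.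
by rewrite pair_bigA /=; apply: eq_bigr => -[].
Qed.

Section Rows.
Variable z : aux_var -> R.

Lemma aux_row_nonneg ip : \sum_j aux_A (inl (inl (inl ip))) j * z j = - z (inl ip).
Proof.
rewrite big_sumType /= sum_mul0r addr0.
by under eq_bigr do rewrite mulNr; rewrite sumrN sum_delta_l.
Qed.

Lemma aux_row_sum i : \sum_j aux_A (inl (inl (inr i))) j * z j = \sum_p z (inl (i, p)).
Proof. by rewrite big_sumType /= sum_mul0r addr0 sum_label_row. Qed.

Lemma aux_row_sumN i : \sum_j aux_A (inl (inr (inl i))) j * z j = - \sum_p z (inl (i, p)).
Proof.
rewrite big_sumType /= sum_mul0r addr0.
by under eq_bigr do rewrite mulNr; rewrite sumrN sum_label_row.
Qed.

Lemma aux_row_incidence kl :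
  \sum_j aux_A (inl (inr (inr kl))) j * z j = z (inr (tag kl)) - z (inl (incidence_point kl)).
Proof.
rewrite big_sumType /= addrC sum_delta_l.
by under eq_bigr do rewrite mulNr; rewrite sumrN sum_delta_l.
Qed.

Lemma aux_row_cap k : \sum_j aux_A (inr k) j * z j = z (inr k).
Proof. by rewrite big_sumType /= sum_mul0r add0r sum_delta_l. Qed.

End Rows.

Section Columns.
Variable y : aux_con -> R.

Lemma aux_col_label i p : \sum_r y r * aux_A r (inl (i, p)) =
  - y (inl (inl (inl (i, p)))) + y (inl (inl (inr i))) - y (inl (inr (inl i)))
  - load (fun kl => y (inl (inr (inr kl)))) i p.
Proof.
rewrite sum_aux_con /= sum_mulr0 addr0.
under eq_bigr do rewrite mulrN eq_sym.
under [X in _ + X + _]eq_bigr do rewrite eq_sym.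
under [X in _ + (X + _)]eq_bigr do rewrite mulrN eq_sym.
under [X in _ + (_ + X)]eq_bigr do rewrite mulrN.
by rewrite !sumrN !sum_delta_r /load addrA.
Qed.

Lemma aux_col_clique k : \sum_r y r * aux_A r (inr k) =
  \sum_(l : {v : V | v \in tag k}) y (inl (inr (inr (incidence_of l)))) + y (inr k).
Proof.
rewrite sum_aux_con /= !sum_mulr0 !add0r.
under [X in X + _]eq_bigr do rewrite eq_sym.
under [X in _ + X]eq_bigr do rewrite eq_sym.
rewrite sum_delta_r sum_sigT; congr (_ + _).
rewrite (bigD1 k) //= [X in _ + X]big1 ?addr0 => [|k' k'k].
  by apply: eq_bigr => l _; rewrite eqxx mulr1.
by rewrite big1 // => l _; rewrite (negbTE k'k) mulr0.
Qed.

End Columns.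

Lemma aux_primal_feasible : (0 < #|P|)%N ->
  primal_feasible aux_A aux_b (fun j => if j is inl _ then #|P|%:R^-1 else 0).
Proof.
move=> P_gt0; have P_neq0 : (#|P|%:R : R) != 0 by rewrite pnatr_eq0 -lt0n.
have sum_uniform : \sum_(p : P) (#|P|%:R : R)^-1 = 1.
  by rewrite sumr_const -[X in X = _]mulr_natr mulVf.
case=> [[[ip|i]|[i|kl]]|k].
- by rewrite aux_row_nonneg oppr_le0 invr_ge0 ler0n.
- by rewrite aux_row_sum sum_uniform.
- by rewrite aux_row_sumN sum_uniform.
- by rewrite aux_row_incidence sub0r oppr_le0 invr_ge0 ler0n.
- by rewrite aux_row_cap ler01.
Qed.

Lemma aux_dual_feasible :
  (forall C, C \in Cs -> forall d, d \in Dc C -> theta d <= 0) ->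
  dual_feasible aux_A aux_c (fun r => if r is inr k then weight Cs Dc theta k else 0).
Proof.
move=> theta_le0; split=> [[[[?|?]|[?|?]]|k]|[[i p]|k]] //=.
- exact: weight_ge0.
- by rewrite aux_col_label /load sum_mul0r !(oppr0, addr0).
- by rewrite aux_col_clique big1 ?add0r.
Qed.

Section Optimum.
Variables (z : aux_var -> R) (y : aux_con -> R).
Hypothesis z_feas : primal_feasible aux_A aux_b z.
Hypothesis y_feas : dual_feasible aux_A aux_c y.

Lemma aux_stochastic : stochastic (fun i p => z (inl (i, p))).
Proof.
split=> [i p|i].
  by have := z_feas (inl (inl (inl (i, p)))); rewrite aux_row_nonneg oppr_le0.
apply: le_anti; have := z_feas (inl (inl (inr i))); have := z_feas (inl (inr (inl i))).
by rewrite aux_row_sum aux_row_sumN lerN2 /= => -> ->.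
Qed.

Lemma aux_cap_le_label_min k : z (inr k) <= label_min (fun i p => z (inl (i, p))) (tagged k).
Proof.
apply: le_bigmin => [|l _]; first by have := z_feas (inr k); rewrite aux_row_cap.
by have := z_feas (inl (inr (inr (incidence_of l)))); rewrite aux_row_incidence subr_le0.
Qed.

Lemma aux_load_le i p : load (fun kl => y (inl (inr (inr kl)))) i p <=
  y (inl (inl (inr i))) - y (inl (inr (inl i))).
Proof.
have := y_feas.2 (inl (i, p)); have := y_feas.1 (inl (inl (inl (i, p)))).
rewrite aux_col_label /=; lra.
Qed.

Lemma aux_weight_le k : weight Cs Dc theta k <=
  \sum_(l : {v : V | v \in tag k}) y (inl (inr (inr (incidence_of l)))) + y (inr k).
Proof. by rewrite -aux_col_clique y_feas.2. Qed.

Lemma aux_dual_objective : \sum_r y r * aux_b r =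
  \sum_i (y (inl (inl (inr i))) - y (inl (inr (inl i)))) + \sum_k y (inr k).
Proof.
rewrite sum_aux_con /= !sum_mulr0 add0r addr0 sumrB.
under eq_bigr do rewrite mulr1; under [X in _ + X + _]eq_bigr do rewrite mulrN1.
by rewrite sumrN; under [X in _ + X]eq_bigr do rewrite mulr1.
Qed.

End Optimum.

Lemma aux_primal_objective z :
  \sum_j aux_c j * z j = \sum_k weight Cs Dc theta k * z (inr k).
Proof. by rewrite big_sumType /= sum_mul0r add0r. Qed.

End AuxiliaryLP.

Lemma relaxed_energy_le_Ddual (R : realFieldType) (V P : finType)
    (Cs : {set {set V}}) (Dc : forall C : {set V}, {set lab P C})
    (theta : forall C : {set V}, lab P C -> R) :
  (0 < #|P|)%N -> (forall C, C \in Cs -> forall d, d \in Dc C -> theta C d <= 0) ->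
  exists2 x, stochastic x & exists mu, relaxed_energy Cs Dc theta x <= Ddual Cs Dc theta mu.
Proof.
move=> P_gt0 theta_le0.
have [z [y [z_feas y_feas yb_le_cz]]] := lp_strong_duality
  (ex_intro _ _ (aux_primal_feasible R P_gt0))
  (ex_intro _ _ (aux_dual_feasible theta_le0)).
exists (fun i p => z (inl (i, p))); first exact: aux_stochastic.
exists (fun i => y (inl (inl (inr i))) - y (inl (inr (inl i)))).
have y_ge0 := y_feas.1.
apply: le_trans (le_Ddual (Lag_lower_bound theta_le0 (fun _ => y_ge0 _) (fun _ => y_ge0 _)
  (fun k _ => aux_weight_le y_feas k) (aux_load_le y_feas))).
rewrite relaxed_energy_weight -opprD -(aux_dual_objective y) lerN2.
apply: le_trans yb_le_cz _; rewrite aux_primal_objective.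
apply: ler_sum => k _; apply: ler_wpM2l; first exact: weight_ge0.
exact: aux_cap_le_label_min.
Qed.

Theorem theorem6 (R : realFieldType) (V P : finType)
  (Cs : {set {set V}}) (Dc : forall C : {set V}, {set lab P C})
  (theta : forall C : {set V}, lab P C -> R) :
  (0 < #|P|)%N ->
  (forall C, C \in Cs -> C != set0) ->
  (forall C, C \in Cs -> forall d, d \in Dc C -> theta C d <= 0) ->
  (forall C, C \in Cs -> forall d1 d2, d1 \in Dc C -> d2 \in Dc C -> d1 != d2 ->
     forall i : {x : V | x \in C}, d1 i != d2 i) ->
  exists v : R,
    (* v is the optimal value of the LP *)
    ((exists yv yc, LP_feasible Cs Dc yv yc /\ LP_obj Cs Dc theta yc = v) /\
     (forall yv yc, LP_feasible Cs Dc yv yc -> v <= LP_obj Cs Dc theta yc)) /\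
    (* v is the maximum of D over lambda *)
    ((exists lam : V -> R, Ddual Cs Dc theta lam = v) /\
     (forall lam : V -> R, Ddual Cs Dc theta lam <= v)).
Proof.
move=> P_gt0 Cs_neq0 theta_le0 Dc_potts.
have [x x_stoch [mu energy_le_D]] := relaxed_energy_le_Ddual P_gt0 theta_le0.
have D_eq : Ddual Cs Dc theta mu = relaxed_energy Cs Dc theta x.
  by apply: le_anti; rewrite energy_le_D Ddual_le_relaxed_energy.
exists (relaxed_energy Cs Dc theta x); split; split.
- exists x, (potts_lift Dc x); split; first exact: potts_lift_feasible.
  exact: LP_obj_potts_lift.
- move=> yv yc yfeas; rewrite -D_eq.
  apply: le_trans (relaxed_energy_le_LP_obj theta_le0 yfeas).
  exact: Ddual_le_relaxed_energy (LP_feasible_stochastic yfeas).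
- by exists mu.
- by move=> lam; apply: Ddual_le_relaxed_energy.
Qed.
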